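(* Let $T$ be a hedge of height $H$, let $C\in\mathcal R(P_{H+1})$ and let $A\in\mathcal{PH}(C,T)$. For $i=1,\dots,H+1$ let $C_i:=C[\{H-i+2,\dots,H+1\}]$ be the trailing $i\times i$ principal submatrix of $C$. Then, as multisets, $$\sigma(A)=\bigcup_{i=1}^{H+1}\ell_i(T)\,\sigma(C_i).$$
   Context: Rooted trees, children, leaves: a rooted tree is a tree with a distinguished root; $y$ is a child of adjacent $z$ if the root-to-$y$ path passes through $z$; in a rooted tree with at least two vertices a leaf is a non-root vertex of degree 1, and in $P_1$ the single vertex is root and leaf. A hedge is a rooted tree which is $P_1$ or in which all leaves are at the same distance from the root. The height $\mathrm{h}(u)$ of a vertex is its distance to a nearest leaf; the height of the hedge is the height of the root. $V_i(T)$ is the set of vertices of height $i$, and $\ell_i(T):=|V_{i-1}(T)|-|V_i(T)|$ for $i\ge1$. $P_n$ is the path $1-2-\cdots-n$, viewed as a hedge of height $n-1$ rooted at vertex $1$ (so vertex $j$ has height $n-j$). $\mathcal R(T)$: real matrices indexed by $V(T)$ with $a_{ij}\ne0$ iff $\{i,j\}\in E(T)$ for $i\ne j$, and $a_{ij}a_{ji}>0$ on edges; diagonal arbitrary. $A[U]$ is the principal submatrix on $U$. Multiset union adds multiplicities; $s\Lambda$ multiplies multiplicities by $s$. Path-to-hedge construction: for a hedge $T$ of height $H$ and $C=(c_{ij})\in\mathcal R(P_{H+1})$, for $v\in V(T)$ let $v'=H+1-\mathrm{h}(v)$ be the vertex of $P_{H+1}$ of the same height. $\mathcal{PH}(C,T)$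 is the set of $A=(a_{uv})\in\mathcal R(T)$ such that $a_{vv}=c_{v'v'}$ for every vertex $v$, and for every non-leaf vertex $v$, $\sum_{u\text{ child of }v}a_{vu}a_{uv}=c_{v',v'+1}\,c_{v'+1,v'}$. *)

From HB Require Import structures.
From mathcomp Require Import all_boot all_order all_algebra.
From mathcomp Require Import complex.
Set Implicit Arguments. Unset Strict Implicit. Unset Printing Implicit Defensive.
Import Order.TTheory GRing.Theory Num.Theory.
Local Open Scope ring_scope.

(* Conventions.
   - A graph on vertex set 'I_n is a boolean relation e : rel 'I_n.
   - Matrices indexed by V(T) = 'I_n are 'M[R]_n.
   - The path P_{H+1} = 1-2-...-(H+1) is represented on 'I_(H.+1) with
     0-based vertices: paper vertex j is ordinal j-1. *)

Section Graphs.
Variable n : nat.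
Implicit Types (e : rel 'I_n) (u v w : 'I_n).

Fixpoint walkb e (d : nat) u w : bool :=
  if d is d'.+1 then [exists x, e u x && walkb e d' x w] else u == w.

Definition distb e u w (d : nat) : bool :=
  walkb e d u w && [forall j : 'I_d, ~~ walkb e j u w].

Definition is_simple_graph e : Prop :=
  (forall u v, e u v = e v u) /\ (forall u, ~~ e u u).

Definition connectedb e : Prop := forall u w, exists d, walkb e d u w.

Definition nedges e : nat := #|[set p : 'I_n * 'I_n | (p.1 < p.2)%N && e p.1 p.2]|.

Definition is_tree e : Prop :=
  (0 < n)%N /\ is_simple_graph e /\ connectedb e /\ nedges e = n.-1.

Definition leafb e (r v : 'I_n) : bool :=
  if n == 1%N then true else (v != r) && (#|[set u | e v u]| == 1%N).

(* y is a child of the adjacent vertex z: the root-to-y path passes through z,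
   i.e. z is adjacent to y and closer to the root by one. *)
Definition childb e (r y z : 'I_n) : bool :=
  e z y && [exists d : 'I_n, distb e r z d && distb e r y d.+1].

Definition heightb e r u (i : nat) : bool :=
  [exists w, leafb e r w && distb e u w i] &&
  [forall w, forall j : 'I_i, leafb e r w ==> ~~ walkb e j u w].

Definition is_hedge e (r : 'I_n) : Prop :=
  is_tree e /\
  (n = 1%N \/
   forall w1 w2 d1 d2, leafb e r w1 -> leafb e r w2 ->
     distb e r w1 d1 -> distb e r w2 d2 -> d1 = d2).

Definition Vset e r (i : nat) : {set 'I_n} := [set u | heightb e r u i].
Definition ell e r (i : nat) : int := (#|Vset e r i.-1|%:Z - #|Vset e r i|%:Z)%R.

Definition inR (R : realDomainType) e (A : 'M[R]_n) : Prop :=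
  (forall i j, i != j -> (A i j != 0) = e i j) /\
  (forall i j, e i j -> 0 < A i j * A j i).
End Graphs.

Definition path_rel (m : nat) : rel 'I_m :=
  fun i j => (i.+1 == j :> nat) || (j.+1 == i :> nat).

(* PH(C,T) for hedge (e, r) of height H and C in R(P_{H+1});
   v' = H+1-h(v) (1-based) is the ordinal H - h(v). *)
Definition inPH (R : realDomainType) n (e : rel 'I_n) (r : 'I_n) (H : nat)
    (C : 'M[R]_(H.+1)) (A : 'M[R]_n) : Prop :=
  inR e A /\
  (forall v k, heightb e r v k ->
     A v v = C (inord (H - k)) (inord (H - k))) /\
  (forall v k, heightb e r v k -> ~~ leafb e r v ->
     \sum_(u | childb e r u v) A v u * A u v =
     C (inord (H - k)) (inord (H - k).+1) * C (inord (H - k).+1) (inord (H - k))).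

(* trailing i x i principal submatrix C[{H-i+2,...,H+1}] (1-based) *)
Definition trailing (R : Type) H (C : 'M[R]_(H.+1)) (i : nat) : 'M[R]_i :=
  \matrix_(a < i, b < i) C (inord (H.+1 - i + a)) (inord (H.+1 - i + b)).

(* multiplicity of lambda (complex) in the spectrum sigma(M) of a real matrix M:
   its algebraic multiplicity, i.e. multiplicity as a root of the
   characteristic polynomial of M viewed over R[i]. *)
Definition spec_mult (R : rcfType) m (M : 'M[R]_m) (lambda : R[i]) : nat :=
  mup lambda (char_poly (map_mx (fun x : R => (x%:C)%C) M)).

From HB Require Import structures.
From mathcomp Require Import all_boot all_order all_algebra.
From mathcomp Require Import complex perm zify.
Import GRing.Theory.
Set Implicit Arguments. Unset Strict Implicit. Unset Printing Implicit Defensive.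

(* Work with characteristic polynomials in the fraction field
   K = R[i](X).  Put d_k = C_{v'v'} and b_k = C_{v',v'+1} C_{v'+1,v'} for the
   path vertex v' of height k, and define the continued fraction
     g_0 = X - d_0,   g_k = (X - d_k) - b_k / g_(k-1).
   Eliminating the vertices of X - A level by level, from the leaves up
   (a Schur complement on a diagonal block at each step), shows
     char A = prod_(v in T) g_(h v).
   The trailing submatrices C_i are themselves path hedges, so the same
   elimination gives char C_(k+1) = g_0 ... g_k, i.e. g_k = char C_(k+1) / char C_k.
   Hence char A * prod_v char C_(h v) = prod_v char C_(h v + 1); taking root
   multiplicities and regrouping the vertices by level (Abel summation) gives
   sigma(A) = U_i ell_i(T) sigma(C_i). *)

Section Walks.
Variables (n : nat) (e : rel 'I_n).
Hypothesis e_sym : forall u v, e u v = e v u.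

Lemma walk_cat a b x y z : walkb e a x y -> walkb e b y z -> walkb e (a + b) x z.
Proof.
elim: a x => [|a IH] x /=; first by move=> /eqP ->.
move=> /existsP [w /andP [exw wy]] yz; apply/existsP; exists w.
by rewrite exw (IH _ wy yz).
Qed.

Lemma walk1 x y : e x y -> walkb e 1 x y.
Proof. by move=> exy; apply/existsP; exists y; rewrite exy /=. Qed.

Lemma walk_rev d u w : walkb e d u w -> walkb e d w u.
Proof.
elim: d u => [|d IH] u; first by rewrite /= eq_sym.
move=> /existsP [x /andP [eux xw]].
by rewrite -addn1; apply: walk_cat (IH _ xw) _; apply: walk1; rewrite e_sym.
Qed.
End Walks.

Section RootedTree.
Variables (n : nat) (e : rel 'I_n) (r : 'I_n).
Hypothesis e_tree : is_tree e.

Lemma e_sym u v : e u v = e v u.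
Proof. by case: e_tree => _ [[s _] _]. Qed.

Lemma e_irr u : e u u = false.
Proof. by case: e_tree => _ [[_ i] _]; apply/negbTE. Qed.

Lemma e_conn u w : exists d, walkb e d u w.
Proof. by case: e_tree => _ [_ [c _]]. Qed.

Definition dep (w : 'I_n) : nat := ex_minn (e_conn r w).

Lemma dep_walk w : walkb e (dep w) r w.
Proof. by rewrite /dep; case: ex_minnP. Qed.

Lemma dep_min w d : walkb e d r w -> (dep w <= d)%N.
Proof. by rewrite /dep; case: ex_minnP => m _ min /min. Qed.

Lemma distb_dep w d : distb e r w d = (d == dep w).
Proof.
apply/andP/eqP => [[wd /forallP nw]|->].
  apply/eqP; rewrite eqn_leq dep_min // andbT leqNgt; apply/negP => lt.
  by have := nw (Ordinal lt); rewrite dep_walk.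
split; first exact: dep_walk.
by apply/forallP => j; apply/negP => /dep_min; rewrite leqNgt ltn_ord.
Qed.

Lemma dep_edge u v : e u v -> (dep v <= (dep u).+1)%N.
Proof. by move=> euv; rewrite -addn1; apply/dep_min/(walk_cat (dep_walk u))/walk1. Qed.

Lemma dep0 w : (dep w == 0%N) = (w == r).
Proof.
apply/eqP/eqP => [d0|->]; last by apply/eqP; rewrite -leqn0 dep_min //= eqxx.
by have := dep_walk w; rewrite d0 /= => /eqP.
Qed.

Lemma parent_ex w : w != r -> exists y, e y w && ((dep y).+1 == dep w).
Proof.
move=> wr; have := dep_walk w; have : dep w != 0%N by rewrite dep0.
case Ed : (dep w) => [//|d] _ /(walk_rev e_sym) /existsP [x /andP [ewx xr]].
exists x; rewrite e_sym ewx /=.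
have := dep_min (walk_rev e_sym xr); have := dep_edge ewx; rewrite e_sym in ewx.
have := dep_edge ewx; rewrite Ed; lia.
Qed.

(* The parent of [w]; by convention the root is its own parent. *)
Definition par (w : 'I_n) : 'I_n :=
  if [pick y | e y w && ((dep y).+1 == dep w)] is Some y then y else w.

Lemma par_spec w : w != r -> e (par w) w /\ (dep (par w)).+1 = dep w.
Proof.
move=> wr; rewrite /par; case: pickP => [y /andP [-> /eqP ->] //|none].
by have [y] := parent_ex wr; rewrite none.
Qed.

Lemma par_r : par r = r.
Proof.
rewrite /par; case: pickP => [y /andP [_ /eqP]|//].
by have := dep0 r; rewrite eqxx => /eqP ->.
Qed.

(* The parent edges [{w, par w}], [w != r], are [n - 1] distinct edges of
   the tree, hence all of its edges: every edge joins a vertex to its parent. *)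
Definition edge_set : {set 'I_n * 'I_n} :=
  [set pr : 'I_n * 'I_n | (pr.1 < pr.2)%N && e pr.1 pr.2].

Definition par_edge (x : 'I_n) : 'I_n * 'I_n :=
  if (x < par x)%N then (x, par x) else (par x, x).

Lemma par_edgeP x : (par_edge x = (x, par x)) \/ (par_edge x = (par x, x)).
Proof. by rewrite /par_edge; case: ifP; [left|right]. Qed.

Lemma par_edge_in x : x != r -> par_edge x \in edge_set.
Proof.
move=> xr; have [epx _] := par_spec xr.
have xpx : x != par x by apply: contraTneq epx => <-; rewrite e_irr.
rewrite inE /par_edge; case: (ltngtP x (par x)) => [lt|gt|eq] /=.
- by rewrite lt e_sym epx.
- by rewrite gt epx.
- by move/eqP: xpx; case; apply: val_inj.
Qed.

(* Distinct non-root vertices have distinct parent edges (depths would clash). *)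
Lemma par_edge_inj : {in [set~ r] &, injective par_edge}.
Proof.
move=> x y; rewrite !inE => xr yr E.
have [_ dx] := par_spec xr; have [_ dy] := par_spec yr.
move: E; case: (par_edgeP x) => ->; case: (par_edgeP y) => -> [a b] //.
  by have := congr1 dep a; have := congr1 dep b; lia.
by have := congr1 dep a; have := congr1 dep b; lia.
Qed.

Lemma edge_setE : edge_set = par_edge @: [set~ r].
Proof.
apply/esym/eqP; rewrite eqEcard; apply/andP; split.
  by apply/subsetP => _ /imsetP [x xr ->]; rewrite par_edge_in -?in_setC1.
case: e_tree => _ [_ [_ ne]]; rewrite -[#|edge_set|]/(nedges e) ne.
by rewrite card_in_imset ?cardsC1 ?card_ord //; exact: par_edge_inj.
Qed.

Lemma edge_par u v : e u v -> par v = u \/ par u = v.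
Proof.
wlog uv : u v / (u < v)%N.
  move=> wlog euv; have [lt|gt|eq] := ltngtP u v; first exact: wlog.
    by rewrite e_sym in euv; case: (wlog v u gt euv); [right|left].
  by move: euv; rewrite (val_inj eq) e_irr.
move=> euv; have : (u, v) \in edge_set by rewrite inE /= uv euv.
by rewrite edge_setE => /imsetP [x _]; case: (par_edgeP x) => -> [-> ->]; [right|left].
Qed.

Lemma edge_dep u v : e u v ->
  (par v = u /\ dep v = (dep u).+1) \/ (par u = v /\ dep u = (dep v).+1).
Proof.
move=> euv; case: (edge_par euv) => puv; [left|right]; split => //.
  have vr : v != r.
    by apply: contraTneq euv => vr; move: puv; rewrite vr par_r => <-; rewrite e_irr.
  by have [_ <-] := par_spec vr; rewrite puv.
have ur : u != r.
  by apply: contraTneq euv => ur; move: puv; rewrite ur par_r => ->; rewrite e_irr.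
by have [_ <-] := par_spec ur; rewrite puv.
Qed.
End RootedTree.

(* In a hedge of height [H] every leaf has depth [H], so the height of a
   vertex is [H - dep v]; children are exactly the vertices one level deeper
   whose parent is [v]. *)
Section Hedge.
Variables (n : nat) (e : rel 'I_n) (r : 'I_n) (H : nat).
Hypothesis e_hedge : is_hedge e r.
Hypothesis r_height : heightb e r r H.

Lemma hedge_tree : is_tree e.
Proof. by case: e_hedge. Qed.
Local Notation dep := (dep r hedge_tree).
Local Notation par := (par r hedge_tree).

Lemma leaf_dep w : leafb e r w -> dep w = H.
Proof.
case/andP: r_height => /existsP [w0 /andP [lw0 dw0]] _.
rewrite (distb_dep r hedge_tree) in dw0.
case: e_hedge => _ [n1|same_dist] lw.
  have all_r (x : 'I_n) : x = r.
    by apply: ord_inj; move: (ltn_ord x) (ltn_ord r) n1; lia.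
  by rewrite (all_r w); rewrite (all_r w0) in dw0; rewrite (eqP dw0).
by apply: (same_dist w w0) => //; rewrite (distb_dep r hedge_tree).
Qed.

Lemma child_ex v : ~~ leafb e r v -> exists c, e v c /\ dep c = (dep v).+1.
Proof.
rewrite /leafb; case: eqP => // n1.
have [->|vr] := eqVneq v r; rewrite ?eqxx /=.
  have : (0 < #|[set~ r]|)%N by rewrite cardsC1 card_ord; move: n1 (ltn_ord r); lia.
  case/card_gt0P => w; rewrite !inE => wr _.
  have := dep_walk r hedge_tree w; have : dep w != 0%N by rewrite (dep0 r hedge_tree).
  case: (dep w) => [//|d] _ /existsP [x /andP [erx _]]; exists x; split => //.
  have r0 : dep r = 0%N by apply/eqP; rewrite (dep0 r hedge_tree).
  have := dep_edge r hedge_tree erx; have : dep x != 0%N.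
    by rewrite (dep0 r hedge_tree); apply: contraTneq erx => ->; rewrite (e_irr hedge_tree).
  by rewrite r0; lia.
move=> not_one; have [epv _] := par_spec hedge_tree vr.
have pin : par v \in [set u | e v u] by rewrite inE (e_sym hedge_tree).
have : (0 < #|[set u | e v u] :\ par v|)%N.
  by move: not_one; rewrite (cardsD1 (par v) [set u | e v u]) pin; lia.
case/card_gt0P => c; rewrite !inE => /andP [cp evc]; exists c; split => //.
by case: (edge_dep r hedge_tree evc) => [[_ ->] //|[pvc _]]; rewrite pvc eqxx in cp.
Qed.

(* Depths are bounded by [H]: otherwise children would give arbitrarily deep
   vertices. *)
Lemma dep_le v : (dep v <= H)%N.
Proof.
rewrite leqNgt; apply/negP => lt.
have chain k : exists w, dep w = (dep v + k)%N.
  elim: k => [|k [w dw]]; first by exists v; rewrite addn0.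
  have nl : ~~ leafb e r w by apply/negP => /leaf_dep; rewrite dw; lia.
  by have [c [_ dc]] := child_ex nl; exists c; rewrite dc dw addnS.
have [w dw] := chain (\max_(x < n) dep x).+1.
have : (dep w <= \max_(x < n) dep x)%N by apply: (@leq_bigmax _ (fun x : 'I_n => dep x) w).
rewrite dw; lia.
Qed.

Lemma leafE v : leafb e r v = (dep v == H).
Proof.
apply/idP/eqP => [/leaf_dep //|dv]; apply/negPn/negP => /child_ex [c [_ dc]].
by have := dep_le c; rewrite dc dv; lia.
Qed.

Definition hgt v := (H - dep v)%N.

Lemma walk_lb u w j : leafb e r w -> walkb e j u w -> (hgt u <= j)%N.
Proof.
move=> /leaf_dep dw uw.
have := dep_min hedge_tree (walk_cat (dep_walk r hedge_tree u) uw); rewrite dw /hgt; lia.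
Qed.

Lemma walk_down u : exists2 w, leafb e r w & walkb e (hgt u) u w.
Proof.
rewrite /hgt; move Ek : (H - dep u)%N => k; elim: k u Ek => [|k IH] u Ek.
  by exists u => //=; rewrite leafE eqn_leq dep_le /=; lia.
have nl : ~~ leafb e r u by rewrite leafE; lia.
have [c [euc dc]] := child_ex nl.
have [w lw cw] : exists2 w, leafb e r w & walkb e k c w by apply: IH; rewrite dc; lia.
by exists w => //; apply/existsP; exists c; rewrite euc.
Qed.

Lemma heightbE u i : heightb e r u i = (i == hgt u).
Proof.
apply/idP/eqP => [/andP [/existsP [w /andP [lw /andP [uw _]]] /forallP all_w]|->].
  apply/eqP; rewrite eqn_leq (walk_lb lw uw) andbT leqNgt; apply/negP => lt.
  have [w' lw' uw'] := walk_down u.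
  by have := forallP (all_w w') (Ordinal lt); rewrite lw' uw'.
have [w lw uw] := walk_down u; apply/andP; split.
  apply/existsP; exists w; rewrite lw /distb uw /=.
  by apply/forallP => j; apply/negP => /(walk_lb lw); rewrite leqNgt ltn_ord.
apply/forallP => w'; apply/forallP => j; apply/implyP => lw'.
by apply/negP => /(walk_lb lw'); rewrite leqNgt ltn_ord.
Qed.

Lemma dep_iter v m : (m <= dep v)%N -> dep (iter m par v) = (dep v - m)%N.
Proof.
elim: m => [|m IH] lm; first by rewrite subn0.
have dI := IH (ltnW lm); have nr : iter m par v != r by rewrite -(dep0 r hedge_tree) dI; lia.
by have [_] := par_spec hedge_tree nr; rewrite iterS dI; lia.
Qed.

(* The ancestors of [v] are [dep v + 1] distinct vertices. *)
Lemma dep_lt v : (dep v < n)%N.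
Proof.
pose f (k : 'I_(dep v).+1) := iter (dep v - k) par v.
have f_inj : injective f.
  move=> a b /(congr1 dep); rewrite /f !dep_iter; try lia.
  by move=> E; apply: ord_inj; move: E (ltn_ord a) (ltn_ord b); lia.
by have := leq_card f f_inj; rewrite !card_ord.
Qed.

Lemma childbE u v : childb e r u v = (par u == v) && (hgt v == (hgt u).+1).
Proof.
apply/idP/idP.
  case/andP => evu /existsP [d /andP]; rewrite !(distb_dep r hedge_tree) => -[/eqP dv /eqP du].
  case: (edge_dep r hedge_tree evu) => [[-> dd]|[_ dd]]; last by move: dd; rewrite -dv -du; lia.
  by rewrite eqxx /=; have := dep_le u; rewrite /hgt; lia.
case/andP => /eqP pu /eqP hh; have [ur|ur] := eqVneq u r.
  by move: pu hh; rewrite ur par_r => <-; lia.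
have [epu dpu] := par_spec hedge_tree ur; rewrite /childb pu in epu *; rewrite epu /=.
apply/existsP; exists (Ordinal (dep_lt v)).
by rewrite !(distb_dep r hedge_tree) /= eqxx -dpu -pu eqxx.
Qed.

Lemma edge_hgt u v : e u v ->
  (par v = u /\ hgt u = (hgt v).+1) \/ (par u = v /\ hgt v = (hgt u).+1).
Proof.
move=> euv; have := dep_le u; have := dep_le v; rewrite /hgt.
by case: (edge_dep r hedge_tree euv) => -[-> ->] ? ?; [left|right]; split => //; lia.
Qed.

Lemma VsetE k : Vset e r k = [set u | hgt u == k].
Proof. by apply/setP => u; rewrite !inE heightbE eq_sym. Qed.
End Hedge.
Local Open Scope ring_scope.

Lemma det_unit_rows (K : comNzRingType) n (P : pred 'I_n) (Q Q0 : 'M[K]_n) :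
  (forall u v, P u -> Q u v = (u == v)%:R) ->
  (forall u v, P u -> Q0 u v = Q u v) ->
  (forall u v, ~~ P v -> Q0 u v = Q u v) ->
  \det Q = \det Q0.
Proof.
move=> Qunit Q0row Q0col; rewrite /determinant; apply: eq_bigr => s _.
congr (_ * _).
have [Pfix|] := boolP [forall u, P u ==> ((s : 'S_n) u == u)].
  apply: eq_bigr => i _; have [Pi|nPi] := boolP (P i); first by rewrite Q0row.
  rewrite Q0col //; apply/negP => Psi.
  have /eqP/perm_inj si := implyP (forallP Pfix (s i)) Psi.
  by move: Psi; rewrite si (negbTE nPi).
rewrite negb_forall => /existsP [u]; rewrite negb_imply => /andP [Pu su].
rewrite (bigD1 u) //= [RHS](bigD1 u) //= Q0row // Qunit // eq_sym (negbTE su).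
by rewrite !mul0r.
Qed.

(* Schur complement with respect to a diagonal block [S] with nonzero pivots,
   kept at full size: the rows and columns of [S] are replaced by unit ones. *)
Section SchurComplement.
Variables (K : fieldType) (n : nat) (S : pred 'I_n) (Q : 'M[K]_n).
Hypothesis Qdiag : forall s t, S s -> S t -> s != t -> Q s t = 0.
Hypothesis Qpivot : forall s, S s -> Q s s != 0.

Definition schur : 'M[K]_n := \matrix_(u, v)
  if S u || S v then (u == v)%:R
  else Q u v - \sum_(s | S s) Q u s * Q s v / Q s s.

(* Column operations [1 - E] clear the rows of [S] outside the pivot block. *)
Let E : 'M[K]_n := \matrix_(s, v) if S s && ~~ S v then Q s v / Q s s else 0.

Let det_1subE : \det (1%:M - E) = 1.
Proof.
rewrite -[RHS](det1 K n); apply: (@det_unit_rows _ _ (predC S)) => u v /=.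
- by move=> nSu; rewrite !mxE (negbTE nSu) subr0.
- by move=> nSu; rewrite !mxE (negbTE nSu) subr0.
- by move=> /negbNE Sv; rewrite !mxE Sv andbF subr0.
Qed.

Let QE_E u v : (Q *m E) u v =
  if S v then 0 else \sum_(s | S s) Q u s * Q s v / Q s s.
Proof.
rewrite mxE; case: ifP => Sv.
  by rewrite big1 // => w _; rewrite mxE Sv andbF mulr0.
rewrite [RHS]big_mkcond; apply: eq_bigr => w _.
by rewrite mxE Sv andbT; case: (S w); rewrite ?mulr0 ?mulrA.
Qed.

Let QsubQE_E u v : (Q - Q *m E) u v = Q u v - (Q *m E) u v.
Proof. by rewrite !mxE. Qed.

Let QE_pivot_rows s v : S s -> ~~ S v -> (Q - Q *m E) s v = 0.
Proof.
move=> Ss nSv; rewrite QsubQE_E QE_E (negbTE nSv) (bigD1 s) //= big1 => [|t /andP [St ts]].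
  by rewrite addr0 mulrC mulrA mulVf ?Qpivot // mul1r subrr.
by rewrite Qdiag 1?eq_sym // !mul0r.
Qed.

Lemma det_schur : \det Q = (\prod_(s | S s) Q s s) * \det schur.
Proof.
pose d : 'rV[K]_n := \row_u (if S u then Q u u else 1).
pose Z : 'M[K]_n := \matrix_(u, v) if S u then (u == v)%:R else (Q - Q *m E) u v.
have factor : Q - Q *m E = diag_mx d *m Z.
  rewrite mul_diag_mx; apply/matrixP => u v.
  rewrite [RHS]mxE [d _ _]mxE [Z _ _]mxE QsubQE_E.
  case: ifP => Su; last by rewrite mul1r.
  have [<-|uv] := eqVneq u v; first by rewrite mulr1 QE_E Su subr0.
  rewrite mulr0; have [Sv|nSv] := boolP (S v); last by rewrite -(QE_pivot_rows Su nSv) QsubQE_E.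
  by rewrite QE_E Sv subr0 Qdiag.
have det_Z : \det Z = \det schur.
  apply: (@det_unit_rows _ _ S) => u v.
  - by rewrite mxE => ->.
  - by move=> Su; rewrite !mxE Su.
  - move=> nSv; rewrite [Z _ _]mxE [schur _ _]mxE (negbTE nSv) orbF.
    by case: ifP => // _; rewrite QsubQE_E QE_E (negbTE nSv).
rewrite -[LHS]mulr1 -[in LHS]det_1subE -det_mulmx mulmxBr mulmx1 factor det_mulmx det_diag.
by rewrite det_Z [in RHS]big_mkcond; congr (_ * _); apply: eq_bigr => u _; rewrite mxE.
Qed.

End SchurComplement.

Section LevelElimination.
Variables (K : fieldType) (n : nat) (h : 'I_n -> nat) (p : 'I_n -> 'I_n).
Variables (M : 'M[K]_n) (al be : nat -> K).

Fixpoint gam k := if k is k'.+1 then al k - be k / gam k' else al 0.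

Hypothesis M_diag : forall u, M u u = al (h u).
Hypothesis M_edge : forall u v, u != v -> M u v != 0 ->
  (p v = u /\ h u = (h v).+1) \/ (p u = v /\ h v = (h u).+1).
Hypothesis M_child : forall v, (0 < h v)%N ->
  \sum_(u | (p u == v) && (h v == (h u).+1)) M v u * M u v = be (h v).
Variable hmax : nat.
Hypothesis h_le : forall u, (h u <= hmax)%N.
Hypothesis gam_neq0 : forall k, (k < hmax)%N -> gam k != 0.

Lemma M_down u s : (h s < h u)%N -> (M u s != 0) || (M s u != 0) ->
  p s = u /\ h u = (h s).+1.
Proof.
move=> hsu; have us : u != s by apply: contraTneq hsu => ->; rewrite ltnn.
have su : s != u by rewrite eq_sym.
case/orP => [/(M_edge us)|/(M_edge su)] [[ps hus]|[ps hus]] //; exfalso; lia.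
Qed.

Lemma M_same_level u v : u != v -> h u = h v -> M u v = 0.
Proof.
move=> uv huv; apply/eqP; apply: contraTT isT => /(M_edge uv).
by rewrite huv; lia.
Qed.

(* Two-step paths through level [j] from above only return to the parent. *)
Lemma child_pair_sum j u v : (j < h u)%N -> (j < h v)%N ->
  \sum_(s | h s == j) M u s * M s v =
  if (u == v) && (h u == j.+1) then be j.+1 else 0.
Proof.
move=> hu hv; have term0 s : h s = j -> M u s * M s v != 0 ->
    [/\ p s = u, p s = v & h u = j.+1].
  move=> hs; rewrite mulf_eq0 negb_or => /andP [nzu nzv].
  have [psu hus] : p s = u /\ h u = (h s).+1 by apply: M_down; rewrite ?hs ?nzu.
  have [psv _] : p s = v /\ h v = (h s).+1 by apply: M_down; rewrite ?hs ?nzv ?orbT.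
  by split; rewrite // hus hs.
have [top|no] := boolP ((u == v) && (h u == j.+1)); last first.
  apply: big1 => s /eqP hs; apply/eqP; apply: contraNT no => /(term0 _ hs).
  by case=> <- <- ->; rewrite !eqxx.
case/andP: top => /eqP uv /eqP huj; subst v; rewrite -huj -M_child ?huj //.
rewrite big_mkcond [RHS]big_mkcond; apply: eq_bigr => s _ /=.
rewrite eqSS; have [hs|hs] := eqVneq (h s) j; rewrite ?andbT ?andbF //.
have [//|psu] := eqVneq (p s) u; apply/eqP; apply: contraNT psu => /(term0 _ hs).
by case=> ->.
Qed.

(* [Mlev j]: the matrix once the levels below [j] are eliminated; their rows
   and columns are unit ones and the diagonal at level [j] is [gam j]. *)
Definition Mlev j : 'M[K]_n := \matrix_(u, v)
  if (h u < j)%N || (h v < j)%N then (u == v)%:R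
  else if u == v then (if h u == j then gam j else al (h u)) else M u v.

Lemma Mlev_low j u v : (h u < j)%N || (h v < j)%N -> Mlev j u v = (u == v)%:R.
Proof. by rewrite mxE => ->. Qed.

Lemma Mlev_high j u v : (j <= h u)%N -> (j <= h v)%N ->
  Mlev j u v = if u == v then (if h u == j then gam j else al (h u)) else M u v.
Proof. by rewrite mxE !ltnNge => -> ->. Qed.

Lemma Mlev_pivot j s : (h s <= j)%N -> Mlev j s s = if h s == j then gam j else 1.
Proof.
rewrite leq_eqVlt => /orP [/eqP hs|hs]; last by rewrite Mlev_low ?hs // eqxx (ltn_eqF hs).
by rewrite Mlev_high ?hs // !eqxx.
Qed.

Lemma Mlev0 : Mlev 0 = M.
Proof.
apply/matrixP => u v; rewrite Mlev_high //.
by case: eqP => [<-|//]; rewrite M_diag; case: eqP => [->|].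
Qed.

Lemma pivot_sum j u v : (j < h u)%N -> (j < h v)%N ->
  \sum_(s | (h s <= j)%N) Mlev j u s * Mlev j s v / Mlev j s s =
  (\sum_(s | h s == j) M u s * M s v) / gam j.
Proof.
move=> hu hv; rewrite mulr_suml big_mkcond [RHS]big_mkcond; apply: eq_bigr => s _ /=.
have [hsj|hsj|hsj] := ltngtP (h s) j => //.
  have us : u != s by apply: contraTneq hu => ->; rewrite ltnNge ltnW.
  by rewrite Mlev_low ?hsj ?orbT // (negbTE us) !mul0r.
have us : u != s by apply: contraTneq hu => ->; rewrite hsj ltnn.
have sv : s != v by apply: contraTneq hv => <-; rewrite hsj ltnn.
rewrite Mlev_pivot ?hsj // eqxx !Mlev_high ?hsj ?(ltnW hu) ?(ltnW hv) //.
by rewrite (negbTE us) (negbTE sv).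
Qed.

(* Eliminating the levels [<= j] of [Mlev j] yields [Mlev j.+1]: the only
   entries that change are the diagonal ones at level [j.+1], which become
   [al (j.+1) - be (j.+1) / gam j = gam (j.+1)]. *)
Lemma schur_Mlev j : schur (fun u => h u <= j)%N (Mlev j) = Mlev j.+1.
Proof.
apply/matrixP => u v; rewrite [LHS]mxE.
have [low|] := boolP ((h u <= j)%N || (h v <= j)%N); first by rewrite Mlev_low.
rewrite negb_or -!ltnNge => /andP [hu hv].
rewrite pivot_sum // child_pair_sum // !Mlev_high ?(ltnW hu) ?(ltnW hv) //.
rewrite (gtn_eqF hu); have [_|uv] := eqVneq u v; last by rewrite mul0r subr0.
by case: eqP => [->|]; rewrite ?mul0r ?subr0.
Qed.

Lemma det_Mlev_step j : (j < hmax)%N ->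
  \det (Mlev j) = (\prod_(u | h u == j) gam j) * \det (Mlev j.+1).
Proof.
move=> jlt; rewrite (det_schur (S := fun u => h u <= j)%N) ?schur_Mlev.
- congr (_ * _); rewrite big_mkcond [RHS]big_mkcond; apply: eq_bigr => s _ /=.
  by case: leqP => [hs|hs]; rewrite ?Mlev_pivot // gtn_eqF.
- move=> s t hs ht st; have [low|] := boolP ((h s < j) || (h t < j))%N.
    by rewrite Mlev_low // (negbTE st).
  rewrite negb_or -!leqNgt => /andP [js jt].
  by rewrite Mlev_high // (negbTE st) M_same_level //; lia.
- by move=> s hs; rewrite Mlev_pivot //; case: (h s == j); [exact: gam_neq0 jlt|exact: oner_neq0].
Qed.

(* The top level needs no pivot: [Mlev hmax] is diagonal. *)
Lemma det_Mlev_top : \det (Mlev hmax) = \prod_(u | (hmax <= h u)%N) gam (h u).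
Proof.
rewrite det_trig; last first.
  apply/is_diag_mx_is_trig/is_diag_mxP => u v /= uv.
  have {}uv : u != v by apply: contraNneq uv => ->.
  have [low|] := boolP ((h u < hmax) || (h v < hmax))%N; first by rewrite Mlev_low // (negbTE uv).
  rewrite negb_or -!leqNgt => /andP [hu hv].
  by rewrite Mlev_high // (negbTE uv) M_same_level //; move: (h_le u) (h_le v); lia.
rewrite [RHS]big_mkcond; apply: eq_bigr => u _ /=.
rewrite Mlev_pivot //; have [->|ne] := eqVneq (h u) hmax; first by rewrite leqnn.
by rewrite leqNgt ltn_neqAle ne h_le.
Qed.

Lemma det_Mlev j : (j <= hmax)%N -> \det (Mlev j) = \prod_(u | (j <= h u)%N) gam (h u).
Proof.
move Ed : (hmax - j)%N => d; elim: d j Ed => [|d IH] j Ed jle.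
  by rewrite (_ : j = hmax) ?det_Mlev_top //; lia.
rewrite det_Mlev_step ?IH; try lia.
rewrite [RHS](bigID (fun u => h u == j)) /=; congr (_ * _).
  by apply: eq_big => [u|u /eqP -> //]; case: eqP => [->|]; rewrite ?leqnn ?andbF.
by apply: eq_bigl => u; rewrite ltn_neqAle andbC eq_sym.
Qed.

Lemma det_levels : \det M = \prod_u gam (h u).
Proof. by rewrite -Mlev0 det_Mlev. Qed.
End LevelElimination.

Section CharPolyLevels.
Variable F : fieldType.
Local Notation K := {fraction {poly F}}.
Local Notation tf := (@tofrac {poly F}).
Variables (dg bb : nat -> F).

Definition gamX : nat -> K := gam (fun k => tf ('X - (dg k)%:P)) (fun k => tf (bb k)%:P).

Lemma char_poly_mxE m (B : 'M[F]_m) u v :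
  char_poly_mx B u v = if u == v then 'X - (B u u)%:P else - (B u v)%:P.
Proof.
by rewrite !mxE; case: eqP => [->|_] /=; rewrite ?mulr1n // mulr0n sub0r.
Qed.

Lemma char_poly_levels m (B : 'M[F]_m) (h : 'I_m -> nat) (p : 'I_m -> 'I_m) hmax :
  (forall u, B u u = dg (h u)) ->
  (forall u v, u != v -> B u v != 0 ->
     (p v = u /\ h u = (h v).+1) \/ (p u = v /\ h v = (h u).+1)) ->
  (forall v, (0 < h v)%N ->
     \sum_(u | (p u == v) && (h v == (h u).+1)) B v u * B u v = bb (h v)) ->
  (forall u, (h u <= hmax)%N) ->
  (forall k, (k < hmax)%N -> gamX k != 0) ->
  tf (char_poly B) = \prod_u gamX (h u).
Proof.
move=> B_diag B_edge B_child h_le gam_neq0; rewrite /char_poly -det_map_mx.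
apply: (det_levels (p := p)) h_le gam_neq0.
- by move=> u; rewrite mxE char_poly_mxE eqxx B_diag.
- move=> u v uv; rewrite mxE char_poly_mxE (negbTE uv) => nz; apply: B_edge uv _.
  by apply: contra nz => /eqP ->; rewrite oppr0 rmorph0.
- move=> v hv; rewrite -(B_child v hv) !rmorph_sum; apply: eq_bigr => u /andP [_ hu].
  have uv : u != v by apply: contraTneq hu => ->; rewrite eqn_leq ltnn andbF.
  rewrite [X in X * _]mxE [X in _ * X]mxE !char_poly_mxE (negbTE uv) eq_sym (negbTE uv).
  by rewrite -rmorphM mulrNN -polyCM.
Qed.
End CharPolyLevels.

(* The path [C]: [dgC k] and [bbC k] are the diagonal entry and the edge
   product at the path vertex of height [k], and [Pc i] is the characteristic
   polynomial of the trailing [i x i] submatrix. *)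
Section PathSpectrum.
Variables (R : rcfType) (H : nat) (C : 'M[R]_(H.+1)).
Hypothesis C_path : inR (@path_rel H.+1) C.
Local Notation toC := (fun x : R => (x%:C)%C).

Definition ent (x y : nat) : R := C (inord x) (inord y).
Definition dgC k : R[i] := toC (ent (H - k) (H - k)).
Definition bbC k : R[i] := toC (ent (H - k) (H - k).+1) * toC (ent (H - k).+1 (H - k)).
Definition Pc i := char_poly (map_mx toC (trailing C i)).
Local Notation g := (gamX dgC bbC).

Lemma ent_nz x y : (x <= H)%N -> (y <= H)%N -> x != y -> ent x y != 0 ->
  y = x.+1 \/ x = y.+1.
Proof.
move=> xH yH xy; rewrite /ent; case: C_path => C_nz _.
rewrite C_nz; last by apply/eqP => /(congr1 val) /=; rewrite !inordK //; apply/eqP.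
by rewrite /path_rel !inordK //; case/orP => /eqP ->; auto.
Qed.

Lemma trailing_ent k (a b : 'I_k.+1) : (k <= H)%N ->
  map_mx toC (trailing C k.+1) a b = toC (ent (H - (k - a)) (H - (k - b))).
Proof.
move=> kH; rewrite !mxE /ent; congr (toC (C (inord _) (inord _))).
- by move: (ltn_ord a); lia.
- by move: (ltn_ord b); lia.
Qed.

(* The trailing submatrix of size [k.+1] is a path hedge whose vertex [a] has
   height [k - a] and parent [a - 1]; level elimination applies to it. *)
Lemma Pc_levels k : (k <= H)%N -> (forall j, (j < k)%N -> g j != 0) ->
  tofrac (Pc k.+1) = \prod_(j < k.+1) g j.
Proof.
move=> kH g_neq0; rewrite /Pc (@char_poly_levels _ dgC bbC _ _
   (fun a : 'I_k.+1 => (k - a)%N) (fun a : 'I_k.+1 => inord a.-1) k).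
- rewrite (reindex_inj rev_ord_inj) /=; apply: eq_bigr => a _.
  by congr g; rewrite /= subnS; move: (ltn_ord a); lia.
- by move=> u; rewrite trailing_ent.
- move=> a b ab; rewrite trailing_ent // => nz.
  have ab' : (H - (k - a))%N != (H - (k - b))%N.
    apply: contra ab => /eqP E; apply/eqP/ord_inj.
    by move: E (ltn_ord a) (ltn_ord b); lia.
  have /ent_nz[|||E|E] : ent (H - (k - a)) (H - (k - b)) != 0.
  + by apply: contra nz => /eqP -> /=; rewrite rmorph0.
  + lia.
  + lia.
  + exact: ab'.
  + left; split; last by move: E (ltn_ord a) (ltn_ord b); lia.
    apply: ord_inj; rewrite inordK; last by move: (ltn_ord b); lia.
    by move: E (ltn_ord a) (ltn_ord b); lia.
  + right; split; last by move: E (ltn_ord a) (ltn_ord b); lia.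
    apply: ord_inj; rewrite inordK; last by move: (ltn_ord a); lia.
    by move: E (ltn_ord a) (ltn_ord b); lia.
- move=> v hv; have vk : (v.+1 < k.+1)%N by lia.
  rewrite (big_pred1 (inord v.+1)); last first.
    move=> u /=; apply/andP/eqP => [[/eqP pu /eqP hu]|->].
      by apply: ord_inj; rewrite inordK //; move: hu (ltn_ord u); lia.
    rewrite inordK //=; split; last by apply/eqP; lia.
    by apply/eqP/ord_inj; rewrite inordK //; lia.
  rewrite !trailing_ent // inordK // /bbC; congr (toC (ent _ _) * toC (ent _ _)); lia.
- by move=> u; exact: leq_subr.
- exact: g_neq0.
Qed.


Lemma Pc_neq0 i : Pc i != 0.
Proof. exact/monic_neq0/char_poly_monic. Qed.

(* Induction on [i]: the factors met so far are nonzero since [Pc i] is. *)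
Lemma Pc_prod i : (i <= H.+1)%N -> tofrac (Pc i) = \prod_(j < i) g j.
Proof.
elim: i => [|i IH] iH; first by rewrite /Pc /char_poly det_mx00 big_ord0 rmorph1.
apply: Pc_levels => [|j ji]; first by rewrite -ltnS.
have := Pc_neq0 i; rewrite -tofrac_eq0 (IH (ltnW iH)).
by move=> /prodf_neq0/(_ (Ordinal ji)); apply.
Qed.

Lemma Pc_step j : (j <= H)%N -> tofrac (Pc j.+1) = tofrac (Pc j) * g j.
Proof.
move=> jH; rewrite Pc_prod; last by rewrite ltnS.
by rewrite Pc_prod ?big_ord_recr // (leq_trans jH).
Qed.

Lemma g_neq0 j : (j <= H)%N -> g j != 0.
Proof.
move=> jH; have := Pc_neq0 j.+1; rewrite -tofrac_eq0 Pc_prod; last by rewrite ltnS.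
by move=> /prodf_neq0/(_ (Ordinal (ltnSn j))); apply.
Qed.
End PathSpectrum.

Lemma mup_prod (F : fieldType) x (I : Type) (s : seq I) (G : I -> {poly F}) :
  (forall i, G i != 0) -> mup x (\prod_(i <- s) G i) = (\sum_(i <- s) mup x (G i))%N.
Proof.
move=> G_neq0; elim: s => [|a s IH]; first by rewrite !big_nil mupNroot // root1.
rewrite !big_cons mupM ?IH ?G_neq0 // prodf_seq_neq0.
by elim: (s) => //= b t ->; rewrite G_neq0.
Qed.

Lemma sum_by_level (V : nmodType) n H (h : 'I_n -> nat) (G : nat -> V) :
  (forall u, (h u <= H)%N) ->
  \sum_u G (h u) = \sum_(k < H.+1) G k *+ #|[set u | h u == k]|.
Proof.
move=> h_le; rewrite (partition_big (fun u => (inord (h u) : 'I_H.+1)) predT) //=.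
apply: eq_bigr => k _; rewrite -sumr_const; apply: eq_big => [u|u /eqP <-].
  by rewrite inE -val_eqE /= inordK // ltnS.
by rewrite inordK // ltnS.
Qed.

Lemma sum_by_parts (R : pzRingType) (c m : nat -> R) N :
  c N = 0 -> m 0%N = 0 ->
  \sum_(k < N) c k * (m k.+1 - m k) = \sum_(1 <= i < N.+1) (c i.-1 - c i) * m i.
Proof.
move=> cN m0; rewrite big_add1 /= big_mkord.
under eq_bigr do rewrite mulrBr; under [RHS]eq_bigr do rewrite mulrBl.
rewrite !sumrB; congr (_ - _).
have drop_last : \sum_(i < N.+1) c i * m i = \sum_(i < N) c i * m i.
  by rewrite big_ord_recr /= cN mul0r addr0.
have drop_first : \sum_(i < N.+1) c i * m i = \sum_(i < N) c i.+1 * m i.+1.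
  by rewrite big_ord_recl /= m0 mulr0 add0r.
by rewrite -drop_last drop_first.
Qed.

Section HedgeSpectrum.
Variables (R : rcfType) (n : nat) (e : rel 'I_n) (r : 'I_n) (H : nat).
Variables (C : 'M[R]_(H.+1)) (A : 'M[R]_n).
Hypotheses (e_hedge : is_hedge e r) (r_height : heightb e r r H).
Hypotheses (C_path : inR (@path_rel H.+1) C) (A_PH : inPH e r C A).
Local Notation h := (hgt H e_hedge).
Local Notation toC := (fun x : R => (x%:C)%C).

Lemma hedge_char_poly :
  tofrac (char_poly (map_mx toC A)) = \prod_u gamX (dgC C) (bbC C) (h u).
Proof.
case: A_PH => -[A_nz _] [A_diag A_child].
apply: (char_poly_levels (p := par r (hedge_tree e_hedge)) (hmax := H)).
- by move=> u; rewrite mxE (A_diag u (h u)) ?(heightbE e_hedge r_height).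
- move=> u v uv; rewrite mxE => nz; apply: (edge_hgt e_hedge r_height).
  by rewrite -(A_nz u v uv); apply: contra nz => /eqP -> /=; rewrite rmorph0.
- move=> v hv; have nl : ~~ leafb e r v.
    by rewrite (leafE e_hedge r_height); move: hv; rewrite /hgt; lia.
  have := A_child v (h v); rewrite (heightbE e_hedge r_height) eqxx => /(_ isT nl).
  rewrite (eq_bigl _ _ (childbE e_hedge r_height ^~ v)) /bbC /ent => E.
  rewrite -[RHS]rmorphM /= -E rmorph_sum; apply: eq_bigr => u _; rewrite !mxE.
  exact/esym/(rmorphM (real_complex R)).
- by move=> u; rewrite /hgt leq_subr.
- by move=> k kH; apply: (g_neq0 C_path); exact: ltnW.
Qed.

Lemma hedge_char_poly_ratio :
  \prod_u Pc C (h u).+1 = \prod_u Pc C (h u) * char_poly (map_mx toC A).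
Proof.
apply/eqP; rewrite -tofrac_eq rmorphM /= !rmorph_prod hedge_char_poly -big_split /=.
by apply/eqP/eq_bigr => u _; rewrite Pc_step // /hgt leq_subr.
Qed.

Lemma hedge_mult lambda :
  (\sum_u mup lambda (Pc C (h u).+1) =
   \sum_u mup lambda (Pc C (h u)) + spec_mult A lambda)%N.
Proof.
have prod_neq0 : \prod_u Pc C (h u) != 0 by apply/prodf_neq0 => u _; exact: Pc_neq0.
have Pc_nz k : Pc C k != 0 := Pc_neq0 C k.
have := congr1 (mup lambda) hedge_char_poly_ratio.
rewrite mupM // ?monic_neq0 ?char_poly_monic //.
by rewrite !(@mup_prod _ lambda _ _ _ (fun _ => Pc_nz _)) => ->.
Qed.
End HedgeSpectrum.

Unset Implicit Arguments.
(* Per vertex, [hedge_mult] contributes [m (h u).+1 - m (h u)];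
   grouping by level and summing by parts gives the coefficients [ell_i]. *)
Theorem mainTheorem3 (R : rcfType) (n : nat) (e : rel 'I_n) (r : 'I_n)
    (H : nat) (C : 'M[R]_(H.+1)) (A : 'M[R]_n) :
  is_hedge e r ->
  heightb e r r H ->
  inR (@path_rel H.+1) C ->
  inPH e r C A ->
  forall lambda : R[i],
    (spec_mult A lambda)%:Z =
    \sum_(1 <= i < H.+2) ell e r i * (spec_mult (trailing C i) lambda)%:Z.
Proof.
move=> e_hedge r_height C_path A_PH lambda.
pose m k := (mup lambda (Pc C k))%:Z.
have h_le u : (hgt H e_hedge u <= H)%N by rewrite /hgt leq_subr.
have by_vertex : (spec_mult A lambda)%:Z =
    \sum_u (m (hgt H e_hedge u).+1 - m (hgt H e_hedge u)).
  by rewrite sumrB -!(big_morph _ PoszD (erefl 0%:Z)) (hedge_mult _ r_height C_path A_PH)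
    PoszD addrC addKr.
rewrite by_vertex (sum_by_level (fun k => m k.+1 - m k) h_le).
under eq_bigr do rewrite -mulr_natl -VsetE // natz.
rewrite (sum_by_parts (c := fun k => #|Vset e r k|%:Z)) //.
- rewrite eq_card0 // => u; rewrite (VsetE e_hedge r_height) !inE.
  by rewrite ltn_eqF // ltnS h_le.
- by rewrite /m /Pc /char_poly det_mx00 mupNroot // root1.
Qed.
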